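(* In the setting of the context, let $\mu_1,\mu_2$ be nowhere-equal solutions of $$\widehat e_1\cdot\nabla\mu=-C_{31}^{2}-\mu\big(C_{31}^{3}+C_{12}^{2}\big)-\mu^{2}C_{12}^{3}$$ and let $\alpha_1,\alpha_2$ be nowhere-vanishing functions satisfying $\widehat e_1\cdot\nabla\ln|\alpha_i/\Vert v\Vert|=C_{31}^{3}+\mu_iC_{12}^{3}$ for $i=1,2$ (so that $J_i=\alpha_i(\widehat e_2+\mu_i\widehat e_3)$ form a compatible pair of Poisson vector fields for which $\dot x=v(x)$ is locally bi-Hamiltonian). Then $$\nabla\cdot\widehat e_1=\widehat e_1\cdot\nabla\ln\left|\frac{\alpha_1\alpha_2(\mu_2-\mu_1)}{\Vert v\Vert^2}\right|.$$
   Context: Setting: $M$ is an oriented three-dimensional manifold with a Riemannian metric $g$; $\nabla$, $\nabla\cdot$, $\nabla\times$ and $\times$ denote gradient, divergence, curl and cross product. A Poisson vector field is a vector field $J$ with $J\cdot(\nabla\times J)=0$. $v$ is a nowhere vanishing vector field, $\widehat e_1=v/\Vert v\Vert$, extended to a local oriented orthonormal frame $(\widehat e_1,\widehat e_2,\widehat e_3)$ with $\widehat e_3=\widehat e_1\times\widehat e_2$, and structure functions $C_{ij}^k$ defined by $[\widehat e_i,\widehat e_j]=C_{ij}^k\widehat e_k$. *)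

From Stdlib Require Import Reals Lra ClassicalEpsilon.
Open Scope R_scope.

(* Points of a coordinate chart U ⊂ R^3: coordinates 0,1,2. *)
Definition pt := nat -> R.

Definition sum3 (F : nat -> R) : R := F 0%nat + F 1%nat + F 2%nat.

Definition shift (x : pt) (i : nat) (t : R) : pt :=
  fun j => if Nat.eqb j i then x j + t else x j.

Definition has_partial (f : pt -> R) (i : nat) (x : pt) (l : R) : Prop :=
  derivable_pt_lim (fun t => f (shift x i t)) 0 l.

(* the i-th partial derivative (meaningful where it exists) *)
Definition pd (f : pt -> R) (i : nat) (x : pt) : R :=
  epsilon (inhabits 0) (fun l => has_partial f i x l).

Definition open3 (U : pt -> Prop) : Prop :=
  forall x, U x -> exists r, 0 < r /\
    forall y, (forall j, (j < 3)%nat -> Rabs (y j - x j) < r) -> U y.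

Definition cont_on (U : pt -> Prop) (f : pt -> R) : Prop :=
  forall x, U x -> forall eps, 0 < eps -> exists delta, 0 < delta /\
    forall y, U y -> (forall j, (j < 3)%nat -> Rabs (y j - x j) < delta) ->
      Rabs (f y - f x) < eps.

Definition C1_on (U : pt -> Prop) (f : pt -> R) : Prop :=
  exists Df : nat -> pt -> R,
    (forall i x, (i < 3)%nat -> U x -> has_partial f i x (Df i x)) /\
    (forall i, (i < 3)%nat -> cont_on U (Df i)).

Definition VF := nat -> pt -> R.
Definition atp (X : VF) (x : pt) : nat -> R := fun k => X k x.

Definition dd (X : VF) (f : pt -> R) (x : pt) : R :=
  sum3 (fun i => X i x * pd f i x).

Definition metric := nat -> nat -> pt -> R.
Definition gin (g : metric) (x : pt) (u w : nat -> R) : R :=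
  sum3 (fun i => sum3 (fun j => g i j x * u i * w j)).

Definition det3 (M : nat -> nat -> R) : R :=
  M 0%nat 0%nat * (M 1%nat 1%nat * M 2%nat 2%nat - M 1%nat 2%nat * M 2%nat 1%nat)
  - M 0%nat 1%nat * (M 1%nat 0%nat * M 2%nat 2%nat - M 1%nat 2%nat * M 2%nat 0%nat)
  + M 0%nat 2%nat * (M 1%nat 0%nat * M 2%nat 1%nat - M 1%nat 1%nat * M 2%nat 0%nat).

Definition detg (g : metric) (x : pt) : R := det3 (fun i j => g i j x).

Definition divg (g : metric) (X : VF) (x : pt) : R :=
  / sqrt (detg g x) * sum3 (fun i => pd (fun y => sqrt (detg g y) * X i y) i x).

Definition bracket (X Y : VF) : VF :=
  fun k x => sum3 (fun i => X i x * pd (Y k) i x - Y i x * pd (X k) i x).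

Definition vnorm (g : metric) (X : VF) (x : pt) : R := sqrt (gin g x (atp X x) (atp X x)).

Definition is_metric_on (U : pt -> Prop) (g : metric) : Prop :=
  (forall i j, (i < 3)%nat -> (j < 3)%nat -> C1_on U (g i j)) /\
  (forall i j x, U x -> g i j x = g j i x) /\
  (forall x u, U x -> (exists i, (i < 3)%nat /\ u i <> 0) -> 0 < gin g x u u).

(* Both sides equal C_31^3 - C_12^2.  On the left, orthonormality of the frame
   gives sqrt (det g) = 1 / det E for the frame matrix E, hence
   div e1 = sum_i d_i e1^i - e1(det E) / det E.  By Jacobi's formula and
   e1(e_a) = e_a(e1) + [e1, e_a], the term e1(det E) / det E equals the
   coordinate trace sum_i d_i e1^i plus sum_a C_1a^a, so div e1 = - sum_a C_1a^a,
   which is C_31^3 - C_12^2 by antisymmetry of the structure functions.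
   On the right the logarithm splits as ln|alpha1/|v|| + ln|alpha2/|v|| + ln|mu2 - mu1|,
   and subtracting the two Riccati equations gives
   e1(mu2 - mu1) / (mu2 - mu1) = - (C_31^3 + C_12^2) - (mu1 + mu2) C_12^3. *)

From Stdlib Require Import Reals Lra Lia ClassicalEpsilon FunctionalExtensionality.
Open Scope R_scope.

Lemma shift_0 x i : shift x i 0 = x.
Proof.
  apply functional_extensionality; intro j; unfold shift.
  destruct (Nat.eqb j i); ring.
Qed.

Lemma pd_eq f i x l : has_partial f i x l -> pd f i x = l.
Proof.
  intro H; unfold pd.
  assert (Hex : exists l, has_partial f i x l) by eauto.
  exact (uniqueness_limite _ _ _ _ (epsilon_spec (inhabits 0) _ Hex) H).
Qed.

Lemma has_partial_pd f i x l : has_partial f i x l -> has_partial f i x (pd f i x).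
Proof. intro H; rewrite (pd_eq _ _ _ _ H); exact H. Qed.

Lemma has_partial_comp (h : R -> R) f i x l dh :
  has_partial f i x l -> derivable_pt_lim h (f x) dh ->
  has_partial (fun y => h (f y)) i x (dh * l).
Proof.
  intros Hf Hh; apply (derivable_pt_lim_comp _ h 0 l dh Hf).
  rewrite shift_0; exact Hh.
Qed.

Lemma has_partial_plus f h i x lf lh : has_partial f i x lf -> has_partial h i x lh ->
  has_partial (fun y => f y + h y) i x (lf + lh).
Proof. exact (derivable_pt_lim_plus _ _ _ _ _). Qed.

Lemma has_partial_minus f h i x lf lh : has_partial f i x lf -> has_partial h i x lh ->
  has_partial (fun y => f y - h y) i x (lf - lh).
Proof. exact (derivable_pt_lim_minus _ _ _ _ _). Qed.

Lemma has_partial_mult f h i x lf lh : has_partial f i x lf -> has_partial h i x lh ->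
  has_partial (fun y => f y * h y) i x (lf * h x + f x * lh).
Proof.
  intros Hf Hh; generalize (derivable_pt_lim_mult _ _ _ _ _ Hf Hh).
  cbv beta; rewrite shift_0; intro H; exact H.
Qed.

Lemma has_partial_div f h i x lf lh : has_partial f i x lf -> has_partial h i x lh ->
  h x <> 0 -> has_partial (fun y => f y / h y) i x ((lf * h x - lh * f x) / (h x)²).
Proof.
  intros Hf Hh Hx.
  assert (Hx' : (fun t => h (shift x i t)) 0 <> 0) by (cbv beta; rewrite shift_0; exact Hx).
  generalize (derivable_pt_lim_div _ _ _ _ _ Hf Hh Hx').
  cbv beta; rewrite shift_0; intro H; exact H.
Qed.

Lemma derivable_pt_lim_ln_abs y : y <> 0 -> derivable_pt_lim (fun t => ln (Rabs t)) y (/ y).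
Proof.
  intro Hy.
  assert (Hln : derivable_pt_lim ln (Rabs y) (/ Rabs y))
    by (apply derivable_pt_lim_ln, Rabs_pos_lt, Hy).
  destruct (Rdichotomy _ _ Hy) as [Hneg | Hpos].
  - replace (/ y) with (/ Rabs y * -1) by (rewrite Rabs_left by exact Hneg; field; lra).
    exact (derivable_pt_lim_comp Rabs ln y _ _ (Rabs_derive_2 y Hneg) Hln).
  - replace (/ y) with (/ Rabs y * 1) by (rewrite Rabs_right by lra; field; lra).
    exact (derivable_pt_lim_comp Rabs ln y _ _ (Rabs_derive_1 y Hpos) Hln).
Qed.

Lemma sum3_ext f h : (forall i, (i < 3)%nat -> f i = h i) -> sum3 f = sum3 h.
Proof. intro H; unfold sum3; rewrite !H by lia; reflexivity. Qed.

Definition diff_at (f : pt -> R) (x : pt) : Prop :=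
  forall i, (i < 3)%nat -> has_partial f i x (pd f i x).

Lemma C1_on_diff_at U f x : C1_on U f -> U x -> diff_at f x.
Proof. intros [Df [HDf _]] Hx i Hi; exact (has_partial_pd _ _ _ _ (HDf i x Hi Hx)). Qed.

Lemma diff_at_plus f h x : diff_at f x -> diff_at h x -> diff_at (fun y => f y + h y) x.
Proof.
  intros Hf Hh i Hi.
  exact (has_partial_pd _ _ _ _ (has_partial_plus _ _ _ _ _ _ (Hf i Hi) (Hh i Hi))).
Qed.

Lemma diff_at_minus f h x : diff_at f x -> diff_at h x -> diff_at (fun y => f y - h y) x.
Proof.
  intros Hf Hh i Hi.
  exact (has_partial_pd _ _ _ _ (has_partial_minus _ _ _ _ _ _ (Hf i Hi) (Hh i Hi))).
Qed.

Lemma diff_at_mult f h x : diff_at f x -> diff_at h x -> diff_at (fun y => f y * h y) x.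
Proof.
  intros Hf Hh i Hi.
  exact (has_partial_pd _ _ _ _ (has_partial_mult _ _ _ _ _ _ (Hf i Hi) (Hh i Hi))).
Qed.

Lemma diff_at_div f h x : diff_at f x -> diff_at h x -> h x <> 0 -> diff_at (fun y => f y / h y) x.
Proof.
  intros Hf Hh H0 i Hi.
  exact (has_partial_pd _ _ _ _ (has_partial_div _ _ _ _ _ _ (Hf i Hi) (Hh i Hi) H0)).
Qed.

Lemma diff_at_sqrt f x : diff_at f x -> 0 < f x -> diff_at (fun y => sqrt (f y)) x.
Proof.
  intros Hf Hpos i Hi; apply (has_partial_pd _ _ _ _ (has_partial_comp sqrt _ _ _ _ _ (Hf i Hi)
    (derivable_pt_lim_sqrt _ Hpos))).
Qed.

Lemma diff_at_vnorm U g v x :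
  (forall i j, (i < 3)%nat -> (j < 3)%nat -> C1_on U (g i j)) ->
  (forall k, (k < 3)%nat -> C1_on U (v k)) -> U x ->
  0 < gin g x (atp v x) (atp v x) -> diff_at (vnorm g v) x.
Proof.
  intros Hg Hv Hx Hpos; apply diff_at_sqrt; [| exact Hpos].
  unfold gin, atp, sum3.
  repeat first [ apply diff_at_plus | apply diff_at_mult
               | apply (C1_on_diff_at U); [first [apply Hg | apply Hv]; lia | exact Hx] ].
Qed.

Lemma dd_of_pd X h x L : (forall i, (i < 3)%nat -> pd h i x = L i) ->
  dd X h x = sum3 (fun i => X i x * L i).
Proof. intro H; unfold dd; apply sum3_ext; intros i Hi; rewrite H by exact Hi; reflexivity. Qed.

Lemma dd_minus X f h x : diff_at f x -> diff_at h x ->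
  dd X (fun y => f y - h y) x = dd X f x - dd X h x.
Proof.
  intros Hf Hh.
  rewrite (dd_of_pd X _ x _ (fun i Hi =>
    pd_eq _ _ _ _ (has_partial_minus _ _ _ _ _ _ (Hf i Hi) (Hh i Hi)))).
  unfold dd, sum3; ring.
Qed.

Lemma dd_mult X f h x : diff_at f x -> diff_at h x ->
  dd X (fun y => f y * h y) x = dd X f x * h x + f x * dd X h x.
Proof.
  intros Hf Hh.
  rewrite (dd_of_pd X _ x _ (fun i Hi =>
    pd_eq _ _ _ _ (has_partial_mult _ _ _ _ _ _ (Hf i Hi) (Hh i Hi)))).
  unfold dd, sum3; ring.
Qed.

Lemma dd_ln_abs X f x : diff_at f x -> f x <> 0 ->
  dd X (fun y => ln (Rabs (f y))) x = dd X f x / f x.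
Proof.
  intros Hf H0.
  rewrite (dd_of_pd X _ x _ (fun i Hi => pd_eq _ _ _ _ (has_partial_comp _ _ _ _ _ _ (Hf i Hi)
    (derivable_pt_lim_ln_abs _ H0)))).
  unfold dd, sum3; field; exact H0.
Qed.

Lemma dd_ln_abs_mult X f h x : diff_at f x -> diff_at h x -> f x <> 0 -> h x <> 0 ->
  dd X (fun y => ln (Rabs (f y * h y))) x =
  dd X (fun y => ln (Rabs (f y))) x + dd X (fun y => ln (Rabs (h y))) x.
Proof.
  intros Hf Hh Hf0 Hh0.
  rewrite !dd_ln_abs, dd_mult; auto using diff_at_mult, Rmult_integral_contrapositive_currified.
  field; auto.
Qed.
Lemma has_partial_local U f h i x l : open3 U -> U x -> (forall y, U y -> f y = h y) ->
  has_partial h i x l -> has_partial f i x l.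
Proof.
  intros HU Hx Hfh Hh.
  destruct (HU x Hx) as [r [Hr Hball]].
  assert (Hline : forall t, Rabs t < r -> U (shift x i t)).
  { intros t Ht; apply Hball; intros j _; unfold shift.
    destruct (Nat.eqb j i).
    - replace (x j + t - x j) with t by ring; exact Ht.
    - rewrite Rminus_diag, Rabs_R0; exact Hr. }
  intros eps Heps.
  destruct (Hh eps Heps) as [d Hd].
  assert (Hm : 0 < Rmin d r) by (apply Rmin_pos; [apply cond_pos | exact Hr]).
  exists (mkposreal _ Hm); intros t Ht0 Ht; simpl in Ht.
  rewrite (Hfh (shift x i (0 + t))), (Hfh (shift x i 0)).
  - apply Hd; [exact Ht0 | pose proof (Rmin_l d r); lra].
  - apply Hline; rewrite Rabs_R0; exact Hr.
  - apply Hline; rewrite Rplus_0_l; pose proof (Rmin_r d r); lra.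
Qed.

Definition colrep (M : nat -> nat -> R) (a : nat) (c : nat -> R) : nat -> nat -> R :=
  fun k b => if Nat.eqb b a then c k else M k b.

Lemma det3_colrep_ext M a c c' : (forall k, (k < 3)%nat -> c k = c' k) ->
  det3 (colrep M a c) = det3 (colrep M a c').
Proof. intro H; unfold det3, colrep; rewrite !H by lia; reflexivity. Qed.

Lemma det3_colrep_lincomb M a (c : nat -> R) : (a < 3)%nat ->
  det3 (colrep M a (fun k => sum3 (fun b => c b * M k b))) = c a * det3 M.
Proof. intro Ha; destruct a as [|[|[|a]]]; try lia; unfold det3, colrep, sum3; simpl; ring. Qed.

Lemma det3_colrep_add M (u w : nat -> nat -> R) :
  sum3 (fun a => det3 (colrep M a (fun k => u a k + w a k))) =
  sum3 (fun a => det3 (colrep M a (u a))) + sum3 (fun a => det3 (colrep M a (w a))).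
Proof. unfold sum3, det3, colrep; simpl; ring. Qed.

Lemma det3_colrep_trace M (A : nat -> nat -> R) :
  sum3 (fun a => det3 (colrep M a (fun k => sum3 (fun i => M i a * A k i)))) =
  sum3 (fun i => A i i) * det3 M.
Proof. unfold sum3, det3, colrep; simpl; ring. Qed.

Lemma det3_gram (G E : nat -> nat -> R) :
  det3 (fun a b => sum3 (fun i => sum3 (fun j => G i j * E i a * E j b))) =
  det3 G * det3 E * det3 E.
Proof. unfold det3, sum3; ring. Qed.

Lemma sqrt_det3_orthonormal (G E : nat -> nat -> R) :
  (forall a b, (a < 3)%nat -> (b < 3)%nat ->
     sum3 (fun i => sum3 (fun j => G i j * E i a * E j b)) = if Nat.eqb a b then 1 else 0) ->
  0 < det3 E -> sqrt (det3 G) = / det3 E.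
Proof.
  intros Hon HE.
  assert (Hgram := det3_gram G E).
  unfold det3 at 1 in Hgram; rewrite !Hon in Hgram by lia; simpl in Hgram.
  replace (det3 G) with (Rsqr (/ det3 E)) by (unfold Rsqr; field_simplify_eq; lra).
  apply sqrt_Rsqr; left; apply Rinv_0_lt_compat, HE.
Qed.

Lemma has_partial_det3 (M : nat -> nat -> pt -> R) (dM : nat -> nat -> R) i x :
  (forall k a, (k < 3)%nat -> (a < 3)%nat -> has_partial (M k a) i x (dM k a)) ->
  has_partial (fun y => det3 (fun k a => M k a y)) i x
    (sum3 (fun a => det3 (colrep (fun k b => M k b x) a (fun k => dM k a)))).
Proof.
  intro HM; unfold det3.
  eapply (eq_ind _ (fun l => has_partial _ i x l)).
  - repeat first [ eapply has_partial_minus | eapply has_partial_plus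
                 | eapply has_partial_mult | apply HM; lia ].
  - unfold sum3, colrep; simpl; ring.
Qed.

Lemma diff_at_det3 (M : nat -> nat -> pt -> R) x :
  (forall k a, (k < 3)%nat -> (a < 3)%nat -> diff_at (M k a) x) ->
  diff_at (fun y => det3 (fun k a => M k a y)) x.
Proof.
  intros HM i Hi; apply (has_partial_pd _ _ _ _
    (has_partial_det3 M (fun k a => pd (M k a) i x) i x (fun k a Hk Ha => HM k a Hk Ha i Hi))).
Qed.

Lemma dd_det3 X (M : nat -> nat -> pt -> R) x :
  (forall k a, (k < 3)%nat -> (a < 3)%nat -> diff_at (M k a) x) ->
  dd X (fun y => det3 (fun k a => M k a y)) x =
  sum3 (fun a => det3 (colrep (fun k b => M k b x) a (fun k => dd X (M k a) x))).
Proof.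
  intro HM.
  rewrite (dd_of_pd X _ x _ (fun i Hi => pd_eq _ _ _ _
    (has_partial_det3 M (fun k a => pd (M k a) i x) i x (fun k a Hk Ha => HM k a Hk Ha i Hi)))).
  unfold dd, sum3, det3, colrep; simpl; ring.
Qed.

Lemma divg_inv_density U g X D x : open3 U -> U x ->
  (forall y, U y -> sqrt (detg g y) = / D y) -> D x <> 0 -> diff_at D x ->
  (forall i, (i < 3)%nat -> diff_at (X i) x) ->
  divg g X x = sum3 (fun i => pd (X i) i x) - dd X D x / D x.
Proof.
  intros HU Hx Hdens HD0 HD HX.
  assert (Hpd : forall i, (i < 3)%nat ->
    pd (fun y => sqrt (detg g y) * X i y) i x =
    (pd (X i) i x * D x - pd D i x * X i x) / (D x)²).
  { intros i Hi; apply pd_eq.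
    apply (has_partial_local U _ (fun y => X i y / D y) i x _ HU Hx).
    - intros y Hy; rewrite Hdens by exact Hy; unfold Rdiv; ring.
    - apply has_partial_div; [exact (HX i Hi i Hi) | exact (HD i Hi) | exact HD0]. }
  unfold divg, dd; rewrite (sum3_ext _ _ Hpd), Hdens, Rinv_inv by exact Hx.
  unfold sum3, Rsqr; field; exact HD0.
Qed.

Lemma bracket_dd X Y k x : bracket X Y k x = dd X (Y k) x - dd Y (X k) x.
Proof. unfold bracket, dd, sum3; ring. Qed.

Section OrthonormalFrame.

Variables (U : pt -> Prop) (g : metric) (e : nat -> VF) (C : nat -> nat -> nat -> pt -> R).

Hypothesis HU : open3 U.
Hypothesis He : forall a k, (1 <= a <= 3)%nat -> (k < 3)%nat -> C1_on U (e a k).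
Hypothesis Hon : forall a b x, (1 <= a <= 3)%nat -> (1 <= b <= 3)%nat -> U x ->
  gin g x (atp (e a) x) (atp (e b) x) = if Nat.eqb a b then 1 else 0.
Hypothesis Hor : forall x, U x -> 0 < det3 (fun k a => e (S a) k x).
Hypothesis HC : forall a b k x, (1 <= a <= 3)%nat -> (1 <= b <= 3)%nat -> (k < 3)%nat -> U x ->
  bracket (e a) (e b) k x =
    C a b 1%nat x * e 1%nat k x + C a b 2%nat x * e 2%nat k x + C a b 3%nat x * e 3%nat k x.

Local Notation E x := (fun k a => e (S a) k x).

Lemma sqrt_detg_frame x : U x -> sqrt (detg g x) = / det3 (E x).
Proof.
  intro Hx; apply sqrt_det3_orthonormal; [| exact (Hor x Hx)].
  intros a b Ha Hb; exact (Hon (S a) (S b) x ltac:(lia) ltac:(lia) Hx).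
Qed.

Lemma structure_coef_det a b c x : (1 <= a <= 3)%nat -> (1 <= b <= 3)%nat -> (c < 3)%nat -> U x ->
  C a b (S c) x * det3 (E x) = det3 (colrep (E x) c (fun k => bracket (e a) (e b) k x)).
Proof.
  intros Ha Hb Hc Hx.
  rewrite (det3_colrep_ext _ _ _ (fun k => sum3 (fun c' => C a b (S c') x * E x k c'))).
  - symmetry; exact (det3_colrep_lincomb (E x) c (fun c' => C a b (S c') x) Hc).
  - intros k Hk; exact (HC a b k x Ha Hb Hk Hx).
Qed.

Lemma structure_coef_antisym a b c x :
  (1 <= a <= 3)%nat -> (1 <= b <= 3)%nat -> (1 <= c <= 3)%nat -> U x ->
  C a b c x = - C b a c x.
Proof.
  intros Ha Hb Hc Hx.
  destruct c as [|c]; [lia |].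
  apply (Rmult_eq_reg_r (det3 (E x))); [| pose proof (Hor x Hx); lra].
  rewrite Ropp_mult_distr_l_reverse.
  rewrite !structure_coef_det by (try exact Hx; lia).
  destruct c as [|[|[|c]]]; try lia; unfold det3, colrep, bracket, sum3; simpl; ring.
Qed.

Lemma divg_frame b x : (1 <= b <= 3)%nat -> U x ->
  divg g (e b) x = - sum3 (fun a => C b (S a) (S a) x).
Proof.
  intros Hb Hx.
  pose proof (Hor x Hx) as HD.
  assert (Hdiff : forall a k, (1 <= a <= 3)%nat -> (k < 3)%nat -> diff_at (e a k) x)
    by (intros; apply (C1_on_diff_at U); auto).
  rewrite (divg_inv_density U g (e b) (fun y => det3 (E y)) x HU Hx sqrt_detg_frame)
    by first [cbv beta; lra | apply diff_at_det3; intros; apply Hdiff; lia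
             | intros; apply Hdiff; lia].
  rewrite (dd_det3 (e b) (fun k a => e (S a) k)) by (intros; apply Hdiff; lia).
  assert (Hcol : forall a, (a < 3)%nat ->
    det3 (colrep (E x) a (fun k => dd (e b) (e (S a) k) x)) =
    det3 (colrep (E x) a (fun k => dd (e (S a)) (e b k) x + bracket (e b) (e (S a)) k x)))
    by (intros a Ha; apply det3_colrep_ext; intros k Hk; rewrite bracket_dd; ring).
  rewrite (sum3_ext _ _ Hcol), det3_colrep_add.
  assert (Htrace : sum3 (fun a => det3 (colrep (E x) a (fun k => dd (e (S a)) (e b k) x))) =
    sum3 (fun i => pd (e b i) i x) * det3 (E x))
    by exact (det3_colrep_trace (E x) (fun k i => pd (e b k) i x)).
  assert (Hbracket : sum3 (fun a => det3 (colrep (E x) a (fun k => bracket (e b) (e (S a)) k x))) =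
    sum3 (fun a => C b (S a) (S a) x * det3 (E x)))
    by (apply sum3_ext; intros a Ha; symmetry; apply structure_coef_det; try exact Hx; lia).
  rewrite Htrace, Hbracket.
  unfold sum3; field; lra.
Qed.

End OrthonormalFrame.

Lemma riccati_difference_quotient a b c m1 m2 d1 d2 : m1 <> m2 ->
  d1 = - a - m1 * b - m1 ^ 2 * c -> d2 = - a - m2 * b - m2 ^ 2 * c ->
  (d2 - d1) / (m2 - m1) = - b - (m1 + m2) * c.
Proof. intros Hm -> ->; field; intro; apply Hm; lra. Qed.

Lemma dd_ln_abs_split X a1 a2 m1 m2 N x :
  diff_at a1 x -> diff_at a2 x -> diff_at m1 x -> diff_at m2 x -> diff_at N x ->
  a1 x <> 0 -> a2 x <> 0 -> m1 x <> m2 x -> N x <> 0 ->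
  dd X (fun y => ln (Rabs (a1 y * a2 y * (m2 y - m1 y) / N y ^ 2))) x =
  dd X (fun y => ln (Rabs (a1 y / N y))) x + dd X (fun y => ln (Rabs (a2 y / N y))) x +
  (dd X m2 x - dd X m1 x) / (m2 x - m1 x).
Proof.
  intros Ha1 Ha2 Hm1 Hm2 HN Ha10 Ha20 Hm HN0.
  assert (Hm0 : m2 x - m1 x <> 0) by (intro; apply Hm; lra).
  assert (Hq1 : diff_at (fun y => a1 y / N y) x) by (apply diff_at_div; auto).
  assert (Hq2 : diff_at (fun y => a2 y / N y) x) by (apply diff_at_div; auto).
  assert (Hq0 : forall a, a <> 0 -> a / N x <> 0)
    by (intros; unfold Rdiv; apply Rmult_integral_contrapositive_currified; auto with real).
  replace (fun y => ln (Rabs (a1 y * a2 y * (m2 y - m1 y) / N y ^ 2)))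
    with (fun y => ln (Rabs (a1 y / N y * (a2 y / N y) * (m2 y - m1 y))))
    by (apply functional_extensionality; intro y; do 2 f_equal;
        unfold Rdiv; rewrite <- pow_inv; ring).
  rewrite (dd_ln_abs_mult X (fun y => a1 y / N y * (a2 y / N y)) (fun y => m2 y - m1 y))
    by (auto using diff_at_mult, diff_at_minus, Rmult_integral_contrapositive_currified).
  rewrite (dd_ln_abs_mult X (fun y => a1 y / N y) (fun y => a2 y / N y)) by auto.
  rewrite (dd_ln_abs X (fun y => m2 y - m1 y)), dd_minus by (auto using diff_at_minus).
  reflexivity.
Qed.

Theorem lemma1
  (U : pt -> Prop) (g : metric) (v : VF) (e : nat -> VF)
  (C : nat -> nat -> nat -> pt -> R)
  (mu1 mu2 alpha1 alpha2 : pt -> R)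
  (HU : open3 U)
  (Hg : is_metric_on U g)
  (Hv : forall k, (k < 3)%nat -> C1_on U (v k))
  (Hv0 : forall x, U x -> exists k, (k < 3)%nat /\ v k x <> 0)
  (He : forall a k, (1 <= a <= 3)%nat -> (k < 3)%nat -> C1_on U (e a k))
  (He1 : forall k x, U x -> e 1%nat k x = v k x / vnorm g v x)
  (Hon : forall a b x, (1 <= a <= 3)%nat -> (1 <= b <= 3)%nat -> U x ->
     gin g x (atp (e a) x) (atp (e b) x) = if Nat.eqb a b then 1 else 0)
  (Hor : forall x, U x -> 0 < det3 (fun k a => e (S a) k x))
  (HC : forall a b k x, (1 <= a <= 3)%nat -> (1 <= b <= 3)%nat -> (k < 3)%nat -> U x ->
     bracket (e a) (e b) k x =
       C a b 1%nat x * e 1%nat k x + C a b 2%nat x * e 2%nat k x + C a b 3%nat x * e 3%nat k x)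
  (Hmu1 : C1_on U mu1) (Hmu2 : C1_on U mu2)
  (Hmu12 : forall x, U x -> mu1 x <> mu2 x)
  (Hode1 : forall x, U x -> dd (e 1%nat) mu1 x =
     - C 3%nat 1%nat 2%nat x - mu1 x * (C 3%nat 1%nat 3%nat x + C 1%nat 2%nat 2%nat x)
     - mu1 x ^ 2 * C 1%nat 2%nat 3%nat x)
  (Hode2 : forall x, U x -> dd (e 1%nat) mu2 x =
     - C 3%nat 1%nat 2%nat x - mu2 x * (C 3%nat 1%nat 3%nat x + C 1%nat 2%nat 2%nat x)
     - mu2 x ^ 2 * C 1%nat 2%nat 3%nat x)
  (Hal1 : C1_on U alpha1) (Hal2 : C1_on U alpha2)
  (Hal10 : forall x, U x -> alpha1 x <> 0) (Hal20 : forall x, U x -> alpha2 x <> 0)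
  (Hlog1 : forall x, U x ->
     dd (e 1%nat) (fun y => ln (Rabs (alpha1 y / vnorm g v y))) x =
       C 3%nat 1%nat 3%nat x + mu1 x * C 1%nat 2%nat 3%nat x)
  (Hlog2 : forall x, U x ->
     dd (e 1%nat) (fun y => ln (Rabs (alpha2 y / vnorm g v y))) x =
       C 3%nat 1%nat 3%nat x + mu2 x * C 1%nat 2%nat 3%nat x) :
  forall x, U x ->
    divg g (e 1%nat) x =
      dd (e 1%nat)
        (fun y => ln (Rabs (alpha1 y * alpha2 y * (mu2 y - mu1 y) / (vnorm g v y) ^ 2))) x.
Proof.
  intros x Hx.
  destruct Hg as [Hgij [_ Hgpos]].
  assert (Hnorm2 : 0 < gin g x (atp v x) (atp v x))
    by (apply Hgpos; [exact Hx | exact (Hv0 x Hx)]).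
  assert (HN : diff_at (vnorm g v) x) by exact (diff_at_vnorm U g v x Hgij Hv Hx Hnorm2).
  assert (HN0 : vnorm g v x <> 0) by (apply Rgt_not_eq, sqrt_lt_R0, Hnorm2).
  rewrite (divg_frame U g e C) by (auto; lia).
  rewrite dd_ln_abs_split by eauto using C1_on_diff_at.
  rewrite Hlog1, Hlog2 by exact Hx.
  rewrite (riccati_difference_quotient _ _ _ _ _ _ _ (Hmu12 x Hx) (Hode1 x Hx) (Hode2 x Hx)).
  pose proof (structure_coef_antisym U e C Hor HC 1 1 1 x) as C111.
  pose proof (structure_coef_antisym U e C Hor HC 1 3 3 x) as C133.
  specialize (C111 ltac:(lia) ltac:(lia) ltac:(lia) Hx).
  specialize (C133 ltac:(lia) ltac:(lia) ltac:(lia) Hx).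
  unfold sum3; lra.
Qed.
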